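(* Let $(\alpha_n)_{n\ge0}\in\mathbb{D}^\infty$ and $k\in\mathbb{Z}_+$. If $G^{(1)},G^{(2)}\in A_{2k}$ have the same image under the quotient map $\psi_{2k}:A_{2k}\to B_{2k}$, then there exists $C<\infty$ (possibly depending on $G^{(1)},G^{(2)}$, but not on $N$) such that for every $N\in\mathbb{Z}_+$, $$\Big|\sum_{n=0}^N[\phi_{2k}(G^{(1)})]_n-\sum_{n=0}^N[\phi_{2k}(G^{(2)})]_n\Big|<C .$$
   Context: $\mathbb{D}$ is the open unit disk. $A_{2k}:=\mathbb{C}[x_1,y_1,\dots,x_k,y_k]$, $B_{2k}:=A_{2k}/(\prod_{i=1}^kx_iy_i-1)$, and $\psi_{2k}$ is the natural quotient homomorphism. $\phi_{2k}$ is the linear map from $A_{2k}$ to complex sequences defined on monomials by $[\phi_{2k}(\prod_{i=1}^k x_i^{\beta_i}y_i^{\gamma_i})]_n=\prod_{i=1}^k\alpha_{n+\beta_i}\overline{\alpha_{n+\gamma_i}}$ for all $\beta_i,\gamma_i\in\mathbb{N}$. *)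

From HB Require Import structures.
From mathcomp Require Import all_boot all_order all_algebra.
From mathcomp Require Import reals.
From mathcomp.real_closed Require Import complex.
From mathcomp Require Import mpoly.

Set Implicit Arguments.
Unset Strict Implicit.
Unset Printing Implicit Defensive.

Import Order.TTheory GRing.Theory Num.Theory.
Local Open Scope ring_scope.
Local Open Scope complex_scope.

(* A_{2k} = C[x_1,y_1,...,x_k,y_k] is {mpoly R[i][k + k]}, with x_i the
   variable 'X_(lshift k i) and y_i the variable 'X_(rshift k i), i < k. *)

Definition xvar (R : realType) (k : nat) (i : 'I_k) : {mpoly R[i][k + k]} :=
  'X_(lshift k i).
Definition yvar (R : realType) (k : nat) (i : 'I_k) : {mpoly R[i][k + k]} :=
  'X_(rshift k i).

(* the polynomial prod_i x_i y_i - 1 generating the ideal defining B_{2k} *)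
Definition Bgen (R : realType) (k : nat) : {mpoly R[i][k + k]} :=
  \prod_(i < k) (xvar R i * yvar R i) - 1.

(* psi_{2k}(G1) = psi_{2k}(G2) in B_{2k} = A_{2k}/(prod x_i y_i - 1):
   G1 - G2 lies in the principal ideal generated by Bgen. *)
Definition same_image_B (R : realType) (k : nat) (G1 G2 : {mpoly R[i][k + k]}) : Prop :=
  exists H : {mpoly R[i][k + k]}, G1 - G2 = H * Bgen R k.

Definition phi_mono (R : realType) (k : nat) (alpha : nat -> R[i])
  (m : 'X_{1.. k + k}) (n : nat) : R[i] :=
  \prod_(i < k) (alpha (n + m (lshift k i))%N * (alpha (n + m (rshift k i))%N)^*).

Definition phi (R : realType) (k : nat) (alpha : nat -> R[i])
  (G : {mpoly R[i][k + k]}) (n : nat) : R[i] :=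
  \sum_(m <- msupp G) G@_m * phi_mono alpha m n.

Definition in_disk_seq (R : realType) (alpha : nat -> R[i]) : Prop :=
  forall n, `|alpha n| < 1.

From HB Require Import structures.
From mathcomp Require Import all_boot all_order all_algebra.
From mathcomp Require Import reals.
From mathcomp.real_closed Require Import complex.
From mathcomp Require Import mpoly ssrcomplements bigenough.
Import Order.TTheory GRing.Theory Num.Theory BigEnough.
Local Open Scope ring_scope.
Local Open Scope complex_scope.

(* Under phi, multiplication by the monomial prod_i x_i y_i shifts the index n
   by one, so phi (H * (prod_i x_i y_i - 1)) is the difference sequence of
   phi H.  Its partial sums telescope to [phi H (N+1) - phi H 0], and since
   |alpha_n| < 1 every [phi H n] is bounded by the sum of the moduli of the
   coefficients of H. *)

Definition mones (k : nat) : 'X_{1.. k} := [multinom 1%N | _ < k].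

Section Phi.

Variables (R : realType) (k : nat) (alpha : nat -> R[i]).
Implicit Types (p q : {mpoly R[i][k + k]}) (m : 'X_{1.. k + k}).

Lemma phiwE b p n : (msize p <= b)%N ->
  phi alpha p n = \sum_(m : 'X_{1..(k + k) < b}) p@_m * phi_mono alpha m n.
Proof.
move=> le_pb; pose I : subFinType _ := 'X_{1..(k + k) < b}.
rewrite /phi (big_mksub I) ?msupp_uniq //=; last first.
  by move=> m /msize_mdeg_lt /leq_trans; apply.
by rewrite big_rmcond //= => m /memN_msupp_eq0 ->; rewrite mul0r.
Qed.

Lemma phiB p q n : phi alpha (p - q) n = phi alpha p n - phi alpha q n.
Proof.
pose_big_enough b.
  rewrite !(@phiwE b) // -sumrB; apply: eq_bigr => m _.
  by rewrite mcoeffB mulrBl.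
by close.
Qed.

Lemma prod_xy_mones : \prod_(i < k) (xvar R i * yvar R i) = 'X_[mones (k + k)].
Proof.
rewrite mpolyXE_id big_split_ord big_split /=.
by congr (_ * _); apply: eq_bigr => i _; rewrite mnmE expr1.
Qed.

Lemma phi_mono_add_mones m n :
  phi_mono alpha (mones (k + k) + m) n = phi_mono alpha m n.+1.
Proof.
by apply: eq_bigr => i _; rewrite !mnmDE !mnmE !add1n !addnS !addSn.
Qed.

Lemma phi_mulX_mones p n :
  phi alpha (p * 'X_[mones (k + k)]) n = phi alpha p n.+1.
Proof.
rewrite /phi (perm_big _ (msuppMX _ _)) big_map; apply: eq_bigr => m _.
by rewrite mcoeffMX phi_mono_add_mones.
Qed.

Lemma phi_mul_Bgen p n :
  phi alpha (p * Bgen R k) n = phi alpha p n.+1 - phi alpha p n.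
Proof. by rewrite /Bgen prod_xy_mones mulrBr mulr1 phiB phi_mulX_mones. Qed.

Hypothesis alpha_disk : in_disk_seq alpha.

Lemma norm_phi_mono_le1 m n : `|phi_mono alpha m n| <= 1.
Proof.
rewrite normr_prod prodr_ile1 // => i _.
by rewrite normr_ge0 normrM normcJ mulr_ile1 ?normr_ge0 ?ltW.
Qed.

Lemma norm_phi_le p n : `|phi alpha p n| <= \sum_(m <- msupp p) `|p@_m|.
Proof.
apply: le_trans (ler_norm_sum _ _ _) _; apply: ler_sum => m _.
by rewrite normrM ler_piMr ?normr_ge0 ?norm_phi_mono_le1.
Qed.

End Phi.

Theorem lemma2 (R : realType) (alpha : nat -> R[i]) (k : nat)
  (G1 G2 : {mpoly R[i][k + k]}) :
  in_disk_seq alpha -> (0 < k)%N -> same_image_B G1 G2 ->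
  exists C : R, forall N : nat, (0 < N)%N ->
    `| \sum_(n < N.+1) phi alpha G1 n - \sum_(n < N.+1) phi alpha G2 n | < C%:C.
Proof.
move=> alpha_disk _ [H eqGH].
set M := \sum_(m <- msupp H) `|H@_m|.
have phiH_le n : `|phi alpha H n| <= M by exact: norm_phi_le.
have /complex_realP [c Mc] : M + M \is Num.real.
  by apply/ger0_real/addr_ge0; apply: sumr_ge0 => m _.
exists (c + 1) => N _; rewrite -sumrB.
under eq_bigr do rewrite -phiB eqGH phi_mul_Bgen.
rewrite -(big_mkord xpredT (fun n => phi alpha H n.+1 - phi alpha H n)).
rewrite telescope_sumr //; apply: le_lt_trans (ler_normB _ _) _.
apply: le_lt_trans (lerD (phiH_le _) (phiH_le _)) _.
by rewrite Mc ltcR ltrDl; exact: ltr01.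
Qed.
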